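(* Let $\mathcal{LS}_{\mathfrak{B}_1}\langle X\rangle$ be the free algebra over a field of characteristic $0$ in the variety of left-symmetric algebras satisfying $(ab)c-(ba)c-(ac)b+(ca)b+(bc)a-(cb)a=0$, and equip it with the commutator $[a,b]=ab-ba$. Then every polynomial identity of degree at most $4$ satisfied by $(\mathcal{LS}_{\mathfrak{B}_1}\langle X\rangle,[\cdot,\cdot])$ is a consequence of anticommutativity and the Jacobi identity.
   Context: A left-symmetric algebra is an algebra with $(a,b,c)=(b,a,c)$, where $(a,b,c)=(ab)c-a(bc)$. *)

From HB Require Import structures.
From mathcomp Require Import all_boot all_order all_algebra.
Set Implicit Arguments. Unset Strict Implicit. Unset Printing Implicit Defensive.
Import GRing.Theory.
Local Open Scope ring_scope.

Inductive napoly (K : Type) : Type :=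
  | pVar of nat
  | pZero
  | pAdd of napoly K & napoly K
  | pScale of K & napoly K
  | pMul of napoly K & napoly K.
Arguments pZero {K}.
Arguments pVar {K} _.

(* Syntactic degree; it bounds the degree of the represented polynomial, and every
   polynomial of degree <= d is represented by an expression of syntactic degree <= d. *)
Fixpoint pdeg (K : Type) (p : napoly K) : nat :=
  match p with
  | pVar _ => 1
  | pZero => 0
  | pAdd p q => maxn (pdeg p) (pdeg q)
  | pScale _ p => pdeg p
  | pMul p q => pdeg p + pdeg q
  end.

Fixpoint peval (K : pzRingType) (V : lmodType K) (m : V -> V -> V) (e : nat -> V)
    (p : napoly K) : V :=
  match p with
  | pVar i => e i
  | pZero => 0
  | pAdd p q => peval m e p + peval m e q
  | pScale c p => c *: peval m e p
  | pMul p q => m (peval m e p) (peval m e q)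
  end.

Definition bilinear_op (K : pzRingType) (V : lmodType K) (m : V -> V -> V) : Prop :=
  [/\ forall a b c, m (a + b) c = m a c + m b c,
      forall a b c, m a (b + c) = m a b + m a c,
      forall (k : K) a b, m (k *: a) b = k *: m a b
    & forall (k : K) a b, m a (k *: b) = k *: m a b].

Definition is_identity (K : pzRingType) (V : lmodType K) (m : V -> V -> V)
    (p : napoly K) : Prop :=
  forall e : nat -> V, peval m e p = 0.

Definition assoc (K : pzRingType) (V : lmodType K) (m : V -> V -> V) (a b c : V) :=
  m (m a b) c - m a (m b c).

Definition left_symmetric (K : pzRingType) (V : lmodType K) (m : V -> V -> V) :=
  forall a b c, assoc m a b c = assoc m b a c.

Definition identity_B1 (K : pzRingType) (V : lmodType K) (m : V -> V -> V) :=
  forall a b c, m (m a b) c - m (m b a) c - m (m a c) b + m (m c a) b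
                + m (m b c) a - m (m c b) a = 0.

Definition LS_B1_algebra (K : pzRingType) (V : lmodType K) (m : V -> V -> V) :=
  [/\ bilinear_op m, left_symmetric m & identity_B1 m].

Definition commutator (K : pzRingType) (V : lmodType K) (m : V -> V -> V) (a b : V) :=
  m a b - m b a.

Definition alg_hom (K : pzRingType) (V W : lmodType K) (mV : V -> V -> V)
    (mW : W -> W -> W) (h : V -> W) : Prop :=
  (forall (k : K) a b, h (k *: a + b) = k *: h a + h b) /\
  (forall a b, h (mV a b) = mW (h a) (h b)).

Definition free_LS_B1 (K : pzRingType) (X : Type) (F : lmodType K)
    (mF : F -> F -> F) (iota : X -> F) : Prop :=
  LS_B1_algebra mF /\
  forall (V : lmodType K) (m : V -> V -> V), LS_B1_algebra m ->
    forall g : X -> V, exists h : F -> V,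
      [/\ alg_hom mF m h, (forall x, h (iota x) = g x)
        & forall h' : F -> V, alg_hom mF m h' -> (forall x, h' (iota x) = g x) ->
            forall a, h' a = h a].

Definition anticommutative (K : pzRingType) (V : lmodType K) (br : V -> V -> V) :=
  forall a b, br a b + br b a = 0.

Definition jacobi (K : pzRingType) (V : lmodType K) (br : V -> V -> V) :=
  forall a b c, br (br a b) c + br (br b c) a + br (br c a) b = 0.

(* p is a consequence of anticommutativity and the Jacobi identity:
   it holds in every algebra satisfying these identities (Birkhoff). *)
Definition lie_consequence (K : pzRingType) (p : napoly K) : Prop :=
  forall (V : lmodType K) (br : V -> V -> V),
    bilinear_op br -> anticommutative br -> jacobi br -> is_identity br p.

From HB Require Import structures.
From mathcomp Require Import all_boot all_order all_algebra.
From mathcomp Require Import boolp classical_sets functions.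
From mathcomp Require Import ring zify.
Set Implicit Arguments.
Unset Strict Implicit.
Unset Printing Implicit Defensive.
Import GRing.Theory.
Local Open Scope ring_scope.

(* A function on words over nat is a formal series in the free associative algebra
   on letters x_0, x_1, ...; [catmul D] is concatenation truncated above degree D.
   Up to degree 4 the commutator of concatenation is also the commutator of a
   product [lsmul] that is left-symmetric and satisfies B1, so by freeness an
   identity p of degree <= 4 of LS_B1<X> under the commutator vanishes as a Lie
   polynomial in the x_i inside the free associative algebra. By the
   Dynkin-Specht-Wever lemma, bracketing words left-normed in any Lie algebra sends
   the degree-n part of such a Lie element to n times its value there; in
   characteristic 0 every homogeneous part of p, hence p, vanishes in every Lie
   algebra. *)

Definition series (K : fieldType) := seq nat -> K^o.

Definition letter (K : fieldType) (i : nat) : series K :=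
  fun w => if w == [:: i] then 1 else 0.

Definition catmul (K : fieldType) (D : nat) (f g : series K) : series K := fun w =>
  if (size w <= D)%N then \sum_(1 <= k < size w) f (take k w) * g (drop k w)
  else 0.

(* The coefficients solve the linear equations that left-symmetry, B1 and
   [lsmul_commutator] impose on a product of words of length <= 4. *)
Definition lsmul (K : fieldType) (f g : series K) : series K := fun w =>
  match w with
  | [:: a; b] => - f [:: b] * g [:: a]
  | [:: a; b; c] =>
      f [:: a] * g [:: b; c] + f [:: c] * g [:: b; a]
      + f [:: a; b] * g [:: c] + f [:: b; a] * g [:: c]
  | [:: a; b; c; d] => 8^-1 * (
        6 * f [:: a] * g [:: b; c; d]
        + 2 * f [:: a] * g [:: b; d; c]
        + f [:: a] * g [:: c; b; d]
        - f [:: a] * g [:: d; b; c]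
        + 4 * f [:: b] * g [:: a; c; d]
        + f [:: c] * g [:: a; d; b]
        - f [:: d] * g [:: a; c; b]
        - 3 * f [:: b] * g [:: c; a; d]
        + 7 * f [:: b] * g [:: d; a; c]
        + 2 * f [:: c] * g [:: d; a; b]
        + 6 * f [:: d] * g [:: c; a; b]
        + 4 * f [:: b] * g [:: c; d; a]
        + f [:: c] * g [:: b; d; a]
        + 7 * f [:: d] * g [:: b; c; a]
        + 2 * f [:: a; b] * g [:: c; d]
        - 2 * f [:: a; b] * g [:: d; c]
        - 2 * f [:: a; c] * g [:: b; d]
        - 6 * f [:: a; d] * g [:: b; c]
        - 8 * f [:: a; d] * g [:: c; b]
        - 2 * f [:: c; a] * g [:: b; d]
        - 6 * f [:: d; a] * g [:: b; c]
        - 8 * f [:: d; a] * g [:: c; b]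
        - 6 * f [:: b; c] * g [:: a; d]
        - 2 * f [:: b; d] * g [:: a; c]
        - 8 * f [:: c; b] * g [:: a; d]
        - 6 * f [:: c; d] * g [:: a; b]
        - 2 * f [:: d; c] * g [:: a; b]
        - 6 * f [:: b; c] * g [:: d; a]
        - 2 * f [:: b; d] * g [:: c; a]
        - 8 * f [:: c; b] * g [:: d; a]
        + 8 * f [:: a; b; c] * g [:: d]
        - f [:: a; c; b] * g [:: d]
        + f [:: a; d; b] * g [:: c]
        + 4 * f [:: a; c; d] * g [:: b]
        + 6 * f [:: c; a; b] * g [:: d]
        + 2 * f [:: d; a; b] * g [:: c]
        - 3 * f [:: c; a; d] * g [:: b]
        + 7 * f [:: d; a; c] * g [:: b]
        + 7 * f [:: b; c; a] * g [:: d]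
        + f [:: b; d; a] * g [:: c]
        + 4 * f [:: c; d; a] * g [:: b]
        - 2 * f [:: b; c; d] * g [:: a]
        + 2 * f [:: b; d; c] * g [:: a]
        + f [:: c; b; d] * g [:: a]
        - f [:: d; b; c] * g [:: a])
  | _ => 0
  end.

Section LeftSymmetricRealisation.
Variable K : fieldType.
Hypothesis char0 : [pchar K] =i pred0.

Let natr_neq0 n : (n.+1%:R : K) != 0.
Proof. by move/pcharf0P: char0 => ->. Qed.

Ltac case_word w := case: w => [|a [|b [|c [|d [|? ?]]]]] /=.

Lemma lsmul_commutator : commutator (@lsmul K) = commutator (catmul 4).
Proof.
apply/funext => f; apply/funext => g; apply/funext => w.
rewrite /commutator /catmul !fctE.
case_word w; rewrite ?unlock /=; by field; rewrite ?natr_neq0.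
Qed.

Lemma lsmul_left_symmetric : left_symmetric (@lsmul K).
Proof.
move=> f g h; apply/funext => w; rewrite /assoc !fctE.
case_word w; by field; rewrite ?natr_neq0.
Qed.

Lemma lsmul_B1 : identity_B1 (@lsmul K).
Proof.
move=> f g h; apply/funext => w; rewrite !fctE -[RHS]/(0 : K).
case_word w; by field; rewrite ?natr_neq0.
Qed.

Lemma lsmul_bilinear : bilinear_op (@lsmul K).
Proof.
split=> *; apply/funext => w; rewrite !fctE /GRing.scale /=;
  case_word w; by field; rewrite ?natr_neq0.
Qed.

Lemma lsmul_LS_B1 : LS_B1_algebra (@lsmul K).
Proof.
by split; [exact: lsmul_bilinear | exact: lsmul_left_symmetric | exact: lsmul_B1].
Qed.

End LeftSymmetricRealisation.

Fixpoint pvar_max (K : Type) (q : napoly K) : nat :=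
  match q with
  | pVar i => i
  | pZero => 0
  | pAdd q1 q2 => maxn (pvar_max q1) (pvar_max q2)
  | pScale _ q1 => pvar_max q1
  | pMul q1 q2 => maxn (pvar_max q1) (pvar_max q2)
  end.

Lemma sum_antidiagonal (V : nmodType) (m : nat) (F : nat -> nat -> V) :
  \sum_(1 <= n < m) \sum_(1 <= k < n) F k (n - k)%N
  = \sum_(1 <= a < m) \sum_(1 <= b < m - a) F a b.
Proof.
elim: m => [|m IHm]; first by rewrite !big_geq.
case: m IHm => [|m] IHm; first by rewrite !big_geq.
rewrite big_nat_recr //= IHm [RHS]big_nat_recr //= subSS subSnn.
rewrite [\sum_(1 <= b < 1) _]big_geq // addr0.
rewrite -big_split; apply: eq_big_nat => a /andP[_ am].
by rewrite [(m.+2 - a)%N]subSn 1?ltnW // big_nat_recr // subn_gt0.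
Qed.

Lemma sum_nat_rev_sub (V : nmodType) n (F : nat -> V) :
  \sum_(1 <= k < n) F k = \sum_(1 <= k < n) F (n - k)%N.
Proof. by rewrite big_nat_rev; apply: eq_big_nat => k _; rewrite add1n subSS. Qed.

Section LieEvaluation.
Variables (K : fieldType) (V : lmodType K) (br : V -> V -> V).
Hypothesis br_bilinear : bilinear_op br.

Lemma brDl a b c : br (a + b) c = br a c + br b c. Proof. by case: br_bilinear. Qed.
Lemma brDr a b c : br a (b + c) = br a b + br a c. Proof. by case: br_bilinear. Qed.
Lemma brZl (k : K) a b : br (k *: a) b = k *: br a b. Proof. by case: br_bilinear. Qed.
Lemma brZr (k : K) a b : br a (k *: b) = k *: br a b. Proof. by case: br_bilinear. Qed.
Lemma br0l b : br 0 b = 0. Proof. by have := brZl 0 0 b; rewrite !scale0r. Qed.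
Lemma br0r a : br a 0 = 0. Proof. by have := brZr 0 a 0; rewrite !scale0r. Qed.
Lemma brNl a b : br (- a) b = - br a b. Proof. by rewrite -scaleN1r brZl scaleN1r. Qed.

Lemma br_suml I (r : seq I) (F : I -> V) b :
  br (\sum_(i <- r) F i) b = \sum_(i <- r) br (F i) b.
Proof. exact: (big_morph (br^~ b) (fun x y => brDl x y b) (br0l b)). Qed.

Lemma br_sumr I (r : seq I) (F : I -> V) a :
  br a (\sum_(i <- r) F i) = \sum_(i <- r) br a (F i).
Proof. exact: (big_morph (br a) (brDr a) (br0r a)). Qed.

Hypotheses (br_anti : anticommutative br) (br_jacobi : jacobi br).

Lemma brC a b : br b a = - br a b.
Proof. by apply/eqP; rewrite -addr_eq0 addrC br_anti. Qed.

Lemma br_derivation y a b : br (br y a) b - br (br y b) a = br y (br a b).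
Proof.
apply/eqP; rewrite -subr_eq0 -(br_jacobi y a b) (brC y (br a b)) (brC y b) brNl.
by rewrite addrAC.
Qed.

Variables (e : nat -> V) (N D : nat).

Definition lnorm_br (w : seq nat) (y : V) : V := foldl (fun u a => br u (e a)) y w.
Definition lnorm (w : seq nat) : V := if w is a :: w' then lnorm_br w' (e a) else 0.

Lemma lnorm_brD w y z : lnorm_br w (y + z) = lnorm_br w y + lnorm_br w z.
Proof. by elim: w y z => [|a w IHw] y z //=; rewrite brDl IHw. Qed.

Lemma lnorm_brZ w (k : K) y : lnorm_br w (k *: y) = k *: lnorm_br w y.
Proof. by elim: w y => [|a w IHw] y //=; rewrite brZl IHw. Qed.

Lemma lnorm_br0 w : lnorm_br w 0 = 0.
Proof. by elim: w => [|a w IHw] //=; rewrite br0l. Qed.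

Lemma lnorm_br_sum w I (r : seq I) (F : I -> V) :
  lnorm_br w (\sum_(i <- r) F i) = \sum_(i <- r) lnorm_br w (F i).
Proof. exact: (big_morph (lnorm_br w) (lnorm_brD w) (lnorm_br0 w)). Qed.

Lemma lnorm_br_cat u v y : lnorm_br (u ++ v) y = lnorm_br v (lnorm_br u y).
Proof. exact: foldl_cat. Qed.

Lemma lnorm_cat u v : u != [::] -> lnorm (u ++ v) = lnorm_br v (lnorm u).
Proof. by case: u => // a u _; rewrite /= lnorm_br_cat. Qed.

Fixpoint words (n : nat) : seq (seq nat) :=
  if n is n'.+1 then [seq a :: w | a <- iota 0 N, w <- words n'] else [:: [::]].

Lemma size_words n w : w \in words n -> size w = n.
Proof.
elim: n w => [|n IHn] w /=; first by rewrite inE => /eqP ->.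
by case/allpairsP => -[a u] [_ /IHn <- ->].
Qed.

Lemma big_words_add k l (F : seq nat -> V) :
  \sum_(w <- words (k + l)) F w = \sum_(u <- words k) \sum_(v <- words l) F (u ++ v).
Proof.
elim: k F => [|k IHk] F; first by rewrite big_seq1.
rewrite addSn /= !big_allpairs_dep; apply: eq_bigr => a _.
exact: (IHk (fun w => F (a :: w))).
Qed.

Definition wsum (n : nat) (G : seq nat -> V) (P : series K) : V :=
  \sum_(w <- words n) P w *: G w.

Lemma wsum_is_linear n G : linear (wsum n G).
Proof.
move=> k P Q; rewrite /wsum scaler_sumr -big_split; apply: eq_bigr => w _.
by rewrite !fctE scalerDl scalerA.
Qed.

HB.instance Definition _ n G :=
  GRing.isLinear.Build K (series K) V *:%R (wsum n G) (wsum_is_linear n G).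

Lemma wsum_letter n G i : (i < N)%N ->
  wsum n G (letter K i) = if n == 1%N then G [:: i] else 0.
Proof.
move=> iN; rewrite /wsum /letter; case: eqP => [->|n_neq1].
  rewrite big_allpairs_dep /= (bigD1_seq i) ?mem_iota ?iota_uniq //= big_seq1.
  rewrite eqxx scale1r big1 ?addr0 // => a ai.
  by rewrite big_seq1 eqseq_cons andbT (negbTE ai) scale0r.
rewrite big1_seq // => w /andP[_ /size_words w_n].
by case: eqP => [w_i|_]; [move: w_n n_neq1; rewrite w_i => <-|rewrite scale0r].
Qed.

Lemma wsum_catmul n G :
  (forall u v, u != [::] -> G (u ++ v) = lnorm_br v (G u)) -> (0 < n <= D)%N ->
  forall P Q : series K, wsum n G (catmul D P Q)
  = \sum_(1 <= k < n) wsum (n - k) (lnorm_br^~ (wsum k G P)) Q.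
Proof.
move=> G_cat /andP[n_gt0 n_le_D] P Q; rewrite /wsum.
under eq_big_seq => w /size_words w_n.
  rewrite /catmul w_n n_le_D scaler_suml; over.
rewrite exchange_big /=; apply: eq_big_nat => k /andP[k_gt0 k_lt_n].
rewrite -{1}(subnKC (ltnW k_lt_n)) big_words_add exchange_big /=.
apply: eq_bigr => v _; rewrite lnorm_br_sum scaler_sumr.
apply: eq_big_seq => u /size_words u_k.
have u_neq0 : u != [::] by rewrite -size_eq0 u_k -lt0n.
by rewrite take_size_cat // drop_size_cat // G_cat // lnorm_brZ scalerA mulrC.
Qed.

Fixpoint peval_part (q : napoly K) (n : nat) : V :=
  match q with
  | pVar i => if n == 1%N then e i else 0
  | pZero => 0
  | pAdd q1 q2 => peval_part q1 n + peval_part q2 n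
  | pScale c q1 => c *: peval_part q1 n
  | pMul q1 q2 => \sum_(1 <= k < n) br (peval_part q1 k) (peval_part q2 (n - k))
  end.

Local Notation lie_series q := (peval (commutator (catmul D)) (letter K) q).

Lemma wsum_lnorm_br_lie_series q n y : (pvar_max q < N)%N -> (0 < n <= D)%N ->
  wsum n (lnorm_br^~ y) (lie_series q) = br y (peval_part q n).
Proof.
elim: q n y => [i||q1 IH1 q2 IH2|c q1 IH1|q1 IH1 q2 IH2] n y /=.
- by move=> iN _; rewrite wsum_letter //; case: eqP; rewrite ?br0r.
- by rewrite raddf0 br0r.
- by rewrite gtn_max => /andP[q1N q2N] n_bd; rewrite raddfD /= IH1 // IH2 // brDr.
- by move=> qN n_bd; rewrite linearZ /= IH1 // brZr.
rewrite gtn_max => /andP[q1N q2N] n_bd.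
have G_cat u v : u != [::] -> lnorm_br (u ++ v) y = lnorm_br v (lnorm_br u y).
  by rewrite lnorm_br_cat.
rewrite [commutator _ _ _]/commutator raddfB /= !(wsum_catmul G_cat n_bd).
rewrite [X in _ - X]sum_nat_rev_sub -sumrB br_sumr.
apply: eq_big_nat => k k_bd; have k_bd' : (0 < k <= D)%N by lia.
have nk_bd : (0 < n - k <= D)%N by lia.
rewrite subKn; last by lia.
by rewrite !IH1 // !IH2 // br_derivation.
Qed.

Lemma wsum_lnorm_lie_series q n : (pvar_max q < N)%N -> (0 < n <= D)%N ->
  wsum n lnorm (lie_series q) = n%:R *: peval_part q n.
Proof.
elim: q n => [i||q1 IH1 q2 IH2|c q1 IH1|q1 IH1 q2 IH2] n /=.
- by move=> iN _; rewrite wsum_letter //; case: eqP => [->|]; rewrite ?scale1r ?scaler0.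
- by rewrite raddf0 scaler0.
- by rewrite gtn_max => /andP[q1N q2N] n_bd; rewrite raddfD /= IH1 // IH2 // scalerDr.
- by move=> qN n_bd; rewrite linearZ /= IH1 // !scalerA mulrC.
rewrite gtn_max => /andP[q1N q2N] n_bd.
rewrite [commutator _ _ _]/commutator raddfB /= !(wsum_catmul lnorm_cat n_bd).
rewrite [X in _ - X]sum_nat_rev_sub -sumrB scaler_sumr.
apply: eq_big_nat => k k_bd; have k_bd' : (0 < k <= D)%N by lia.
have nk_bd : (0 < n - k <= D)%N by lia.
rewrite subKn; last by lia.
rewrite !wsum_lnorm_br_lie_series // IH1 // IH2 // !brZl.
(* The two products of the commutator contribute k and n - k copies of the bracket. *)
rewrite (brC (peval_part q1 k)) scalerN.
by rewrite opprK -scalerDl -natrD subnKC // ltnW; case/andP: k_bd.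
Qed.

Lemma peval_part_gt_pdeg q n : (pdeg q < n)%N -> peval_part q n = 0.
Proof.
elim: q n => [i||q1 IH1 q2 IH2|c q1 IH1|q1 IH1 q2 IH2] n /=.
- by case: eqP => [->|].
- by [].
- by rewrite gtn_max => /andP[q1n q2n]; rewrite IH1 // IH2 // addr0.
- by move=> qn; rewrite IH1 // scaler0.
move=> q_lt_n; apply: big1_seq => k /andP[_].
rewrite mem_index_iota => /andP[k_gt0 k_lt_n].
have [q1k|k_le_q1] := ltnP (pdeg q1) k; first by rewrite IH1 // br0l.
by rewrite (IH2 (n - k)%N) ?br0r //; lia.
Qed.

Lemma peval_sum_parts q m : (pdeg q < m)%N ->
  peval br e q = \sum_(1 <= n < m) peval_part q n.
Proof.
elim: q m => [i||q1 IH1 q2 IH2|c q1 IH1|q1 IH1 q2 IH2] m /= q_lt_m.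
- rewrite (big_cat_nat (n := 2)) //= big_nat1 eqxx big1_seq ?addr0 // => n.
  by rewrite mem_index_iota => /andP[_ /andP[n_gt1 _]]; case: eqP n_gt1 => // ->.
- by rewrite big1.
- move: q_lt_m; rewrite gtn_max => /andP[q1m q2m].
  by rewrite (IH1 m) // (IH2 m) // big_split.
- by rewrite (IH1 m) // scaler_sumr.
rewrite (IH1 m) ?(leq_ltn_trans (leq_addr _ _) q_lt_m) // br_suml.
rewrite (@sum_antidiagonal _ m (fun a b => br (peval_part q1 a) (peval_part q2 b))).
apply: eq_big_nat => a /andP[a_gt0 a_lt_m].
rewrite (IH2 m) ?(leq_ltn_trans (leq_addl _ _) q_lt_m) // br_sumr.
rewrite (big_cat_nat (n := m - a)) ?leq_subr ?subn_gt0 //=.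
rewrite [X in _ + X]big1_seq ?addr0 // => b /andP[_].
rewrite mem_index_iota => /andP[b_ge _].
have [q1a|a_le_q1] := ltnP (pdeg q1) a; first by rewrite (peval_part_gt_pdeg q1a) br0l.
have q2b : (pdeg q2 < b)%N.
  by rewrite (leq_trans _ b_ge) // ltn_subRL (leq_ltn_trans _ q_lt_m) // leq_add2r.
by rewrite (peval_part_gt_pdeg q2b) br0r.
Qed.

Hypothesis char0 : [pchar K] =i pred0.

Lemma peval_eq0_of_lie_series_eq0 q : (pvar_max q < N)%N -> (pdeg q <= D)%N ->
  lie_series q = 0 -> peval br e q = 0.
Proof.
move=> qN qD q0; rewrite (peval_sum_parts (m := D.+1)) //.
apply: big1_seq => n /andP[_]; rewrite mem_index_iota => /andP[n_gt0 n_le_D].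
have n_bd : (0 < n <= D)%N by rewrite n_gt0 -ltnS.
have /esym/eqP := wsum_lnorm_lie_series qN n_bd.
rewrite q0 raddf0 scaler_eq0 => /orP[|/eqP //].
by move/pcharf0P: char0 => ->; rewrite gtn_eqF.
Qed.

End LieEvaluation.

Lemma lie_consequence_of_lie_series_eq0 (K : fieldType) (char0 : [pchar K] =i pred0) D
    (p : napoly K) :
  (pdeg p <= D)%N -> peval (commutator (catmul D)) (letter K) p = 0 ->
  lie_consequence p.
Proof.
move=> pD p0 V br br_bil br_anti br_jac e.
exact: (peval_eq0_of_lie_series_eq0 br_bil br_anti br_jac e char0 (ltnSn _) pD p0).
Qed.

Section AlgebraMorphisms.
Variables (K : pzRingType) (U W : lmodType K) (mU : U -> U -> U) (mW : W -> W -> W).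
Variable h : U -> W.
Hypothesis h_hom : alg_hom mU mW h.

Lemma alg_hom_commutator : alg_hom (commutator mU) (commutator mW) h.
Proof.
case: h_hom => h_lin h_mul; split=> // a b.
by rewrite /commutator (zmod_morphism_linear h_lin) !h_mul.
Qed.

Lemma alg_hom0 : h 0 = 0.
Proof.
case: h_hom => h_lin _; have := h_lin 1 0 0; rewrite !scale1r addr0 => h00.
by apply: (addrI (h 0)); rewrite addr0 -h00.
Qed.

Lemma alg_hom_peval (E : nat -> U) q : h (peval mU E q) = peval mW (h \o E) q.
Proof.
case: h_hom => h_lin h_mul; have [h_scale h_add] := GRing.semilinear_linear h_lin.
elim: q => [i||q1 IH1 q2 IH2|c q1 IH1|q1 IH1 q2 IH2] //=.
- exact: alg_hom0.
- by rewrite h_add IH1 IH2.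
- by rewrite h_scale IH1.
- by rewrite h_mul IH1 IH2.
Qed.

End AlgebraMorphisms.

Theorem mainTheorem8 (K : fieldType) (char0 : [pchar K] =i pred0)
    (X : Type) (Xinf : exists e : nat -> X, injective e)
    (F : lmodType K) (mF : F -> F -> F) (iota : X -> F)
    (Hfree : free_LS_B1 mF iota)
    (p : napoly K) (Hdeg : (pdeg p <= 4)%N)
    (Hid : is_identity (commutator mF) p) :
  lie_consequence p.
Proof.
case: Hfree => _ univ; case: Xinf => x x_inj.
have [h [h_hom h_iota _]] :=
  univ _ _ (lsmul_LS_B1 char0) (letter K \o 'pinv_(fun=> 0%N) setT x).
have h_letter : h \o (iota \o x) = letter K.
  apply/funext => i /=; rewrite h_iota /= pinvKV ?in_setT //.
  by move=> ? ? _ _; apply: x_inj.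
apply: (lie_consequence_of_lie_series_eq0 char0 Hdeg).
rewrite -(lsmul_commutator char0).
have := alg_hom_peval (alg_hom_commutator h_hom) (iota \o x) p.
by rewrite Hid (alg_hom0 h_hom) h_letter => <-.
Qed.
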